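(* Let the user types be drawn from a distribution $\mathcal D_U$ and the creator types from a distribution $\mathcal D_C$ (arbitrary distributions on non-negative unit vectors of $\mathbb R^D$), and let $U,C,K,D,\bar e,\bar a$ be arbitrary. Then $$\mathbb E\left[\frac{\mathrm{LTE}(\mathbf{UC})}{\mathrm{LTE}(\mathbf{FL})}\,\middle|\,\mathrm{LTE}(\mathbf{FL})>0\right]\le\Pr\left(\text{at least }K\text{ creators stay after }t=0\text{ under }UC_0\,\middle|\,\mathrm{LTE}(\mathbf{FL})>0\right),$$ where ''at least $K$ creators stay after $t=0$ under $UC_0$'' means $|\mathcal C_1|\ge K$ when the user-centric recommendation $UC_0$ is used at $t=0$.
   Context: An instance consists of a dimension $D$, users $\mathcal U_0=\{1,\dots,U\}$ with types $u_i\in\mathbb R^D_{\ge0}$, creators $\mathcal C_0=\{1,\dots,C\}$ with types $c_j\in\mathbb R^D_{\ge 0}$, all of Euclidean norm $1$, a positive integer $K$, a creator threshold $\bar a\in\mathbb N_0$ and a user threshold $\bar e\in[0,1]$. At time $t=0,1,\dots$ the platform has sets $\mathcal U_t,\mathcal C_t$ and chooses $R_t$ assigning each $i\in\mathcal U_t$ a set $R_t(i)\subseteq\mathcal C_t$ of size $K$ (smaller only if necessary). Engagement $E(\mathcal U,\mathcal C,R)=\sum_{i\in\mathcal U}\sum_{j\in R(i)}u_i^Tc_j$. Then $\mathcal U_{t+1}=\{i\in\mathcal U_t:|R_t(i)|=K,\ u_i^Tc_j\ge\bar e\ \forall j\in R_t(i)\}$, $\mathcal C_{t+1}=\{j\in\mathcal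 C_t:|\{i\in\mathcal U_t:j\in R_t(i)\}|\ge\bar a\}$. $\mathrm{LTE}(\mathbf R)=\lim_{T\to\infty}\frac1T\sum_{t<T}E(\mathcal U_t,\mathcal C_t,R_t)$. $\mathbf{FL}$ is any sequence maximizing $\mathrm{LTE}$; $\mathbf{UC}$ is the sequence with $UC_t(i)\in\arg\max_{S\subseteq\mathcal C_t,|S|\le K}\sum_{j\in S}u_i^Tc_j$. *)

From HB Require Import structures.
From mathcomp Require Import all_boot all_order all_algebra.
From mathcomp Require Import all_classical all_reals all_analysis.

Set Implicit Arguments.
Unset Strict Implicit.
Unset Printing Implicit Defensive.

Import Order.TTheory GRing.Theory Num.Theory.
Import numFieldNormedType.Exports.
Local Open Scope classical_set_scope.
Local Open Scope ring_scope.

(** Types are vectors of R^D, represented as D-tuples (which carry the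
    canonical product sigma-algebra of MathComp-Analysis). *)
Definition ip {R : realType} {D : nat} (x y : D.-tuple R) : R :=
  \sum_(k < D) tnth x k * tnth y k.

Definition unit_nonneg {R : realType} {D : nat} : set (D.-tuple R) :=
  [set x | (forall k, 0 <= tnth x k) /\ ip x x = 1].

Section Dynamics.
Variables (R : realType) (U C D K : nat) (ebar : R) (abar : nat).
Variables (u : 'I_U -> D.-tuple R) (c : 'I_C -> D.-tuple R).

Definition recom := 'I_U -> {set 'I_C}.
Definition state := ({set 'I_U} * {set 'I_C})%type.

Definition valid_recom (s : state) (r : recom) : Prop :=
  forall i, i \in s.1 -> r i \subset s.2 /\ #|r i| = minn K #|s.2|.

Definition engagement (s : state) (r : recom) : R :=
  \sum_(i in s.1) \sum_(j in r i) ip (u i) (c j).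

Definition step (s : state) (r : recom) : state :=
  ([set i in s.1 | (#|r i| == K) &&
                   [forall j in r i, ebar <= ip (u i) (c j)]],
   [set j in s.2 | (abar <= #|[set i in s.1 | j \in r i]|)%N]).

Fixpoint traj (Rs : nat -> recom) (t : nat) : state :=
  match t with
  | 0 => (finset.setT, finset.setT)
  | t'.+1 => step (traj Rs t') (Rs t')
  end.

Definition feasible (Rs : nat -> recom) : Prop :=
  forall t, valid_recom (traj Rs t) (Rs t).

Definition avg_eng (Rs : nat -> recom) (T : nat) : R :=
  (\sum_(t < T) engagement (traj Rs t) (Rs t)) / T%:R.

Definition LTE (Rs : nat -> recom) : R := limn (avg_eng Rs).

Definition LTE_FL : R :=
  sup [set l : R | exists Rs, feasible Rs /\ (avg_eng Rs @ \oo --> l)].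

Definition is_UC (Rs : nat -> recom) : Prop :=
  feasible Rs /\
  forall t i, i \in (traj Rs t).1 ->
    forall S : {set 'I_C}, S \subset (traj Rs t).2 -> (#|S| <= K)%N ->
      \sum_(j in S) ip (u i) (c j) <= \sum_(j in Rs t i) ip (u i) (c j).

End Dynamics.

From Pilot Require Import Defs.
From HB Require Import structures.
From mathcomp Require Import all_boot all_order all_algebra.
From mathcomp Require Import all_classical all_reals all_analysis.
From mathcomp Require Import measurable_realfun.
Import Order.TTheory GRing.Theory Num.Theory.
Import numFieldNormedType.Exports.
Local Open Scope classical_set_scope.
Local Open Scope ring_scope.

(* For every realization of the types, 0 <= LTE(UC) / LTE(FL) <= 1 if
   |C_1| >= K and 0 otherwise; integrating this pointwise bound over
   {LTE(FL) > 0} gives the claim.  Under any recommendation the states (U_t, C_t)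
   decrease, so they are eventually constant; from then on the engagement of UC
   is the optimal value at that fixed state, hence constant, and LTE(UC) is a
   genuine Cesaro limit of a feasible sequence, bounded by LTE(FL).  If
   |C_1| < K, every user present at t = 1 receives fewer than K creators and
   leaves, so the engagement vanishes from t = 2 on and LTE(UC) = 0. *)

Lemma cvg_avg (R : archiRealFieldType) (e : R ^nat) (l : R) :
  e @ \oo --> l -> (fun T => (\sum_(t < T) e t) / T%:R) @ \oo --> l.
Proof.
move=> /cesaro e_avg; rewrite -cvg_shiftS; apply: cvg_trans e_avg.
apply: near_eq_cvg; apply: nearW => n.
by rewrite /arithmetic_mean /= seriesEnat /= big_mkord mulrC.
Qed.

Lemma nonincreasing_eventually_const (f : nat -> nat) :
  (forall t, (f t.+1 <= f t)%N) -> exists N, forall t, (N <= t)%N -> f t = f N.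
Proof.
move=> f_decr; have f_homo := @homo_leq _ f (fun m n => n <= m)%N leqnn
  (fun _ _ _ le_yx le_zy => leq_trans le_zy le_yx) f_decr.
have attained : exists m, `[< exists t, f t = m >].
  by exists (f 0); apply/asboolP; exists 0%N.
case: (ex_minnP attained) => m /asboolP[N fN] m_min.
exists N => t Nt; apply/eqP; rewrite eqn_leq f_homo //= fN.
by apply: m_min; apply/asboolP; exists t.
Qed.

Section SubsetChain.
Context {T : finType} {A : nat -> {set T}}.
Hypothesis A_decr : forall t, A t.+1 \subset A t.

Lemma chain_subset m n : (m <= n)%N -> A n \subset A m.
Proof.
apply: (@homo_leq _ A (fun X Y => Y \subset X) (fun X => subxx X)) => //.
by move=> ? ? ? yx zy; apply: fintype.subset_trans zy yx.
Qed.

Lemma chain_eventually_const : exists N, forall t, (N <= t)%N -> A t = A N.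
Proof.
have [N cardN] := @nonincreasing_eventually_const (fun t => #|A t|)
  (fun t => subset_leq_card (A_decr t)).
by exists N => t Nt; apply/eqP; rewrite eqEcard chain_subset //= cardN.
Qed.

End SubsetChain.

Section Dynamics.
Context {R : realType} {U C D K : nat} {ebar : R} {abar : nat}.
Context {u : 'I_U -> D.-tuple R} {c : 'I_C -> D.-tuple R}.

Local Notation trajectory := (traj K ebar abar u c).
Local Notation eng := (engagement u c).
Local Notation avg := (avg_eng K ebar abar u c).
Local Notation LTE := (LTE K ebar abar u c).
Local Notation LTE_FL := (LTE_FL K ebar abar u c).
Local Notation feasible := (feasible K ebar abar u c).
Local Notation is_UC := (is_UC K ebar abar u c).

Lemma step_users_eq0 s r : valid_recom K s r -> (#|s.2| < K)%N ->
  (step K ebar abar u c s r).1 = finset.set0.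
Proof.
move=> valid few; apply/setP => i; rewrite !inE; apply/negbTE/andP.
move=> [i_s /andP[/eqP card_K _]]; have [_] := valid i i_s.
by rewrite card_K => /esym/minn_idPl; rewrite leqNgt few.
Qed.

Context {Rs : nat -> recom U C}.

Lemma traj_users_decr t : (trajectory Rs t.+1).1 \subset (trajectory Rs t).1.
Proof. by apply/fintype.subsetP => i; rewrite inE => /andP[]. Qed.

Lemma traj_creators_decr t : (trajectory Rs t.+1).2 \subset (trajectory Rs t).2.
Proof. by apply/fintype.subsetP => j; rewrite inE => /andP[]. Qed.

Lemma traj_eventually_const :
  exists N, forall t, (N <= t)%N -> trajectory Rs t = trajectory Rs N.
Proof.
have [N1 users_const] := chain_eventually_const traj_users_decr.
have [N2 creators_const] := chain_eventually_const traj_creators_decr.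
exists (maxn N1 N2) => t; rewrite geq_max => /andP[N1t N2t].
rewrite [trajectory Rs t]surjective_pairing.
rewrite [trajectory Rs (maxn N1 N2)]surjective_pairing; congr pair.
- by rewrite (users_const t) // (users_const (maxn N1 N2)) ?leq_maxl.
- by rewrite (creators_const t) // (creators_const (maxn N1 N2)) ?leq_maxr.
Qed.

(* Different optimal choices have the same value: the maximum over the same
   family of sets. *)
Lemma UC_engagement_state t n : is_UC Rs -> trajectory Rs t = trajectory Rs n ->
  eng (trajectory Rs t) (Rs t) = eng (trajectory Rs n) (Rs n).
Proof.
move=> [feas opt] same; rewrite /engagement same; apply: eq_bigr => i i_n.
have i_t : i \in (trajectory Rs t).1 by rewrite same.
have [sub_t card_t] := feas t i i_t; have [sub_n card_n] := feas n i i_n.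
apply/le_anti/andP; split.
- by apply: opt => //; [rewrite -same | rewrite card_t geq_minl].
- by apply: opt => //; [rewrite same | rewrite card_n geq_minl].
Qed.

Lemma UC_engagement_eventually_const : is_UC Rs -> exists N, forall t, (N <= t)%N ->
  eng (trajectory Rs t) (Rs t) = eng (trajectory Rs N) (Rs N).
Proof.
move=> UC; have [N const] := traj_eventually_const.
by exists N => t Nt; apply: UC_engagement_state (const t Nt).
Qed.

Lemma avg_eng_cvg_eventually_const N l :
  (forall t, (N <= t)%N -> eng (trajectory Rs t) (Rs t) = l) -> avg Rs @ \oo --> l.
Proof.
move=> const; apply: (@cvg_avg _ (fun t => eng (trajectory Rs t) (Rs t))).
by apply: cvg_near_cst; exists N.
Qed.

Lemma UC_avg_eng_cvg : is_UC Rs -> avg Rs @ \oo --> LTE Rs.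
Proof.
move=> /UC_engagement_eventually_const[N /avg_eng_cvg_eventually_const cv].
by rewrite /Defs.LTE (cvg_lim _ cv).
Qed.

(* [sup] is [0] on sets without a supremum, which [0 < LTE_FL] rules out. *)
Lemma LTE_FL_ge l : feasible Rs -> avg Rs @ \oo --> l -> 0 < LTE_FL -> l <= LTE_FL.
Proof.
move=> feas cv; rewrite /Defs.LTE_FL; set S := [set l | _].
have [S_sup _|S_nosup] := pselect (has_sup S).
  by apply: sup_upper_bound => //; exists Rs.
by rewrite sup_out // ltxx.
Qed.

Lemma few_creators_LTE0 : feasible Rs -> (#|(trajectory Rs 1).2| < K)%N -> LTE Rs = 0.
Proof.
move=> feas few; have users2 : (trajectory Rs 2).1 = finset.set0
  := @step_users_eq0 _ _ (feas 1%N) few.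
have eng0 t : (2 <= t)%N -> eng (trajectory Rs t) (Rs t) = 0.
  move=> t_ge2; have : (trajectory Rs t).1 \subset (trajectory Rs 2).1.
    exact: chain_subset traj_users_decr _ _ t_ge2.
  by rewrite users2 finset.subset0 => /eqP empty; rewrite /engagement empty big_set0.
by move: eng0 => /avg_eng_cvg_eventually_const cv; rewrite /Defs.LTE (cvg_lim _ cv).
Qed.

Hypotheses (u_ge0 : forall i k, 0 <= tnth (u i) k) (c_ge0 : forall j k, 0 <= tnth (c j) k).

Lemma engagement_ge0 s r : 0 <= eng s r.
Proof. by do 3!(apply: sumr_ge0 => ? _); apply: mulr_ge0. Qed.

Lemma LTE_ge0 : cvgn (avg Rs) -> 0 <= LTE Rs.
Proof.
move=> cv; apply: limr_ge => //; apply: nearW => T.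
by apply: divr_ge0 => //; apply: sumr_ge0 => t _; apply: engagement_ge0.
Qed.

Lemma UC_LTE_ratio_bounds : is_UC Rs -> 0 < LTE_FL ->
  0 <= LTE Rs / LTE_FL <= (K <= #|(trajectory Rs 1).2|)%N%:R.
Proof.
move=> UC FL_gt0; have cv := UC_avg_eng_cvg UC.
apply/andP; split; first by rewrite divr_ge0 ?(ltW FL_gt0) ?(LTE_ge0 (cvgP _ cv)).
case: leqP => [_|few]; last by rewrite few_creators_LTE0 ?mul0r //; case: UC.
by rewrite ler_pdivrMr // mul1r; apply: LTE_FL_ge cv FL_gt0; case: UC.
Qed.

End Dynamics.

Theorem lemma10 (R : realType) (U C D K : nat) (ebar : R) (abar : nat)
  (dO : measure_display) (Omega : measurableType dO) (P : probability Omega R)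
  (DU DC : probability (D.-tuple R) R)
  (u : 'I_U -> Omega -> D.-tuple R) (c : 'I_C -> Omega -> D.-tuple R)
  (UC : Omega -> nat -> recom U C) :
  (0 < K)%N -> 0 <= ebar <= 1 ->
  (* types are non-negative unit vectors *)
  (forall i w, unit_nonneg (u i w)) -> (forall j w, unit_nonneg (c j w)) ->
  (* the types are random variables *)
  (forall i, measurable_fun setT (u i)) -> (forall j, measurable_fun setT (c j)) ->
  (* user types have distribution DU, creator types distribution DC *)
  (forall i B, measurable B -> P (u i @^-1` B) = DU B) ->
  (forall j B, measurable B -> P (c j @^-1` B) = DC B) ->
  (* all types are mutually independent *)
  (forall (BU : 'I_U -> set (D.-tuple R)) (BC : 'I_C -> set (D.-tuple R)),
     (forall i, measurable (BU i)) -> (forall j, measurable (BC j)) ->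
     P ((\bigcap_(i in [set: 'I_U]) (u i @^-1` BU i)) `&`
        (\bigcap_(j in [set: 'I_C]) (c j @^-1` BC j)))
     = ((\prod_(i < U) P (u i @^-1` BU i)) *
        (\prod_(j < C) P (c j @^-1` BC j)))%E) ->
  (* UC w is a user-centric sequence for the instance drawn at w *)
  (forall w, is_UC K ebar abar (fun i => u i w) (fun j => c j w) (UC w)) ->
  let FLpos := [set w | 0 < LTE_FL K ebar abar (fun i => u i w) (fun j => c j w)] in
  let stayK := [set w | (K <= #|(traj K ebar abar (fun i => u i w) (fun j => c j w)
                                   (UC w) 1).2|)%N] in
  let ratio := fun w =>
    LTE K ebar abar (fun i => u i w) (fun j => c j w) (UC w) /
    LTE_FL K ebar abar (fun i => u i w) (fun j => c j w) in
  (* the conditional quantities are well defined *)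
  measurable FLpos -> measurable stayK -> measurable_fun FLpos ratio ->
  (0 < P FLpos)%E ->
  ((\int[P]_(w in FLpos) (ratio w)%:E) / P FLpos <= P (FLpos `&` stayK) / P FLpos)%E.
Proof.
move=> _ _ u_unit c_unit _ _ _ _ _ UC_opt FLpos stayK ratio mFLpos mstayK mratio _.
have ratio_bounds w : FLpos w -> 0 <= ratio w <= \1_stayK w.
  move=> FLpos_w; rewrite indicE.
  have -> : (w \in stayK) = (K <= #|(traj K ebar abar (fun i => u i w) (fun j => c j w)
                                   (UC w) 1).2|)%N.
    by apply/idP/idP => [/set_mem | /mem_set].
  exact: UC_LTE_ratio_bounds (fun i => (u_unit i w).1) (fun j => (c_unit j w).1)
    (UC_opt w) FLpos_w.
apply: lee_wpmul2r; first by rewrite inve_ge0 measure_ge0.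
rewrite setIC -integral_indic //; apply: ge0_le_integral => //.
- by move=> w /ratio_bounds/andP[? _]; rewrite lee_fin.
- exact/measurable_EFinP.
- by apply/measurable_EFinP; exact: measurable_indic.
- by move=> w /ratio_bounds/andP[_ ?]; rewrite lee_fin.
Qed.
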